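(* For every $t\ge0$, every $n\ge1$ and every $\mathfrak{t}_n\in\mathbb{T}(n)$, $p_n(\mathfrak{t}_n)=\mathsf{P}_t[\tau_n=\mathfrak{t}_n]$.
   Context: McKean trees: $\mathbb{T}(1)=\{\mathfrak{t}_1\}$ (a single leaf) and for $n\ge2$, $\mathbb{T}(n)=\bigcup_{k=1}^{n-1}\mathbb{T}(k)\times\mathbb{T}(n-k)$; a tree $\mathfrak{t}_n=(\mathfrak{t}^l_n,\mathfrak{t}^r_n)$ has left subtree with $n_l$ leaves and right subtree with $n_r=n-n_l$ leaves, leaves numbered left to right. The germination $\mathfrak{t}_{n,k}\in\mathbb{T}(n+1)$, $k=1,\dots,n$, is obtained by replacing the $k$-th leaf of $\mathfrak{t}_n$ by the two-leaved tree $\mathfrak{t}_2=(\mathfrak{t}_1,\mathfrak{t}_1)$. Weights: $p_1(\mathfrak{t}_1)=1$ and $p_n(\mathfrak{t}_n)=\frac{1}{n-1}p_{n_l}(\mathfrak{t}^l_n)p_{n_r}(\mathfrak{t}^r_n)$ for $n\ge2$. $(\tau_n)_{n\ge1}$ is a random sequence, defined on a probability space with probability $\mathsf{P}_t$, with $\tau_n\in\mathbb{T}(n)$, which is Markov with $\mathsf{P}_t[\tau_1=\mathfrak{t}_1]=1$, $\mathsf{P}_t[\tau_{n+1}=\mathfrak{t}_{n,k}\mid\tau_n=\mathfrak{t}_n]=1/n$ for $k=1,\dots,n$, and $\mathsf{P}_t[\tau_{n+1}=\mathfrak{s}\mid\tau_n=\mathfrak{t}_n]=0$ if $\mathfrak{s}$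 is not a germination of $\mathfrak{t}_n$. *)

From HB Require Import structures.
From mathcomp Require Import all_boot all_order all_algebra.
From mathcomp Require Import all_classical all_reals.
From mathcomp Require Import ereal measure probability.
Set Implicit Arguments. Unset Strict Implicit. Unset Printing Implicit Defensive.
Import Order.TTheory GRing.Theory Num.Theory.

Inductive tree : Type := Leaf : tree | Node : tree -> tree -> tree.

(* number of leaves; T(n) = [set t | leaves t = n] *)
Fixpoint leaves (t : tree) : nat :=
  match t with Leaf => 1 | Node l r => leaves l + leaves r end.

(* germination t_{n,k}: replace the k-th leaf (leaves numbered 1,2,... from
   left to right) by the two-leaved tree (Leaf, Leaf). *)
Fixpoint germ (t : tree) (k : nat) : tree :=
  match t with
  | Leaf => if k == 1 then Node Leaf Leaf else Leaf
  | Node l r => if k <= leaves l then Node (germ l k) r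
                else Node l (germ r (k - leaves l))
  end.

Fixpoint pw {R : realType} (t : tree) : R :=
  match t with
  | Leaf => 1
  | Node l r => (((leaves l + leaves r)%N - 1)%:R)^-1 * (pw l * pw r)
  end.

Local Open Scope classical_set_scope.
Local Open Scope ereal_scope.

Definition history {Omega : Type} (tau : nat -> Omega -> tree) (n : nat)
  (h : nat -> tree) : set Omega :=
  [set w | forall i, (1 <= i <= n)%N -> tau i w = h i].

(* Collapsing a cherry (Node Leaf Leaf) of s into a leaf gives the [parents s],
   the trees of which s is a germination, each in exactly one way.  Conditioning
   on tau_n therefore gives P[tau_(n+1) = s] = 1/n * sum_(u in parents s) P[tau_n = u],
   and the weights obey the same recursion:
   sum_(u in parents s) pw u = (leaves s - 1) * pw s.  For s = Node l r this
   follows by induction, since a parent of s collapses a cherry of l or of r and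
   (leaves l + leaves r - 2) = (leaves l - 1) + (leaves r - 1) is the
   normalising factor in pw of every such parent. *)

From HB Require Import structures.
From mathcomp Require Import all_boot all_order all_algebra.
From mathcomp Require Import all_classical all_reals.
From mathcomp Require Import ereal measure probability.
From mathcomp Require Import ring zify.
Import Order.TTheory GRing.Theory Num.Theory.

Fixpoint tree_eqb (t1 t2 : tree) : bool :=
  match t1, t2 with
  | Leaf, Leaf => true
  | Node l1 r1, Node l2 r2 => tree_eqb l1 l2 && tree_eqb r1 r2
  | _, _ => false
  end.

Lemma tree_eqP : Equality.axiom tree_eqb.
Proof.
elim=> [|l1 IHl r1 IHr] [|l2 r2] /=; try by constructor.
by case: (IHl l2) => [->|?]; case: (IHr r2) => [->|?]; constructor; congruence.
Qed.

HB.instance Definition _ := hasDecEq.Build tree tree_eqP.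

Lemma leaves_gt0 (t : tree) : (0 < leaves t)%N.
Proof. by elim: t => //= l IHl r _; rewrite addn_gt0 IHl. Qed.

Lemma leaves_eq1 {t : tree} : leaves t = 1%N -> t = Leaf.
Proof. by case: t => //= l r; move: (leaves_gt0 l) (leaves_gt0 r); lia. Qed.

Fixpoint parents (s : tree) : seq tree :=
  match s with
  | Leaf => [::]
  | Node l r => (if (l == Leaf) && (r == Leaf) then [:: Leaf] else [::])
      ++ [seq Node u r | u <- parents l] ++ [seq Node l u | u <- parents r]
  end.

Lemma leaves_parents {s u : tree} : u \in parents s -> leaves s = (leaves u).+1.
Proof.
elim: s u => [|l IHl r IHr] u //=.
rewrite !mem_cat => /or3P [|/mapP [u' /IHl -> ->]|/mapP [u' /IHr -> ->]] /=.
- by case: ifP => // /andP [/eqP -> /eqP ->]; rewrite inE => /eqP ->.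
- by rewrite addSn.
- by rewrite addnS.
Qed.

Lemma germ_parents (u : tree) (k : nat) :
  (1 <= k <= leaves u)%N -> u \in parents (germ u k).
Proof.
elim: u k => [|l IHl r IHr] k /=.
  by move=> k1; have -> : k = 1%N by lia.
move=> k_range; case: ifP => kl /=; rewrite !mem_cat; apply/or3P.
  by apply/Or32/map_f/IHl; lia.
by apply/Or33/map_f/IHr; lia.
Qed.

Lemma parentsP {s u : tree} : u \in parents s ->
  exists2 k, (1 <= k <= leaves u)%N & s = germ u k.
Proof.
elim: s u => [|l IHl r IHr] u //=.
rewrite !mem_cat => /or3P [|/mapP [u' /IHl [k k_range ->] ->]
                           |/mapP [u' /IHr [k k_range ->] ->]] /=.
- case: ifP => // /andP [/eqP -> /eqP ->]; rewrite inE => /eqP ->.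
  by exists 1%N.
- by exists k; [move: (leaves_gt0 r); lia | rewrite (proj2 (andP k_range))].
- exists (leaves l + k)%N; first by move: (leaves_gt0 l); lia.
  by rewrite addKn ifN //; lia.
Qed.

Lemma parents_uniq (s : tree) : uniq (parents s).
Proof.
elim: s => [|l IHl r IHr] //=.
rewrite !cat_uniq !map_inj_uniq ?IHl ?IHr; try by move=> ? ? [].
have disjoint_maps :
    ~~ has (mem [seq Node u r | u <- parents l]) [seq Node l u | u <- parents r].
  apply/hasPn => _ /mapP [u' _ ->]; apply/negP => /mapP [u /leaves_parents + [ul _]].
  by rewrite ul; lia.
case: ifP => [/andP [/eqP -> /eqP ->]|_] //=.
by rewrite andbT; apply/andP; split; [apply/hasPn | exact: disjoint_maps].
Qed.

Section Weights.
Variable R : realType.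
Local Open Scope ring_scope.

Lemma pw_Node (l r : tree) :
  (leaves l + leaves r).-1%:R * pw (Node l r) = pw l * pw r :> R.
Proof.
rewrite /= -subn1 mulrA mulfV ?mul1r // pnatr_eq0.
by move: (leaves_gt0 l) (leaves_gt0 r); lia.
Qed.

Lemma sum_pw_parents (s : tree) :
  \sum_(u <- parents s) pw u = (leaves s).-1%:R * pw s :> R.
Proof.
elim: s => [|l IHl r IHr]; first by rewrite big_nil mul0r.
rewrite pw_Node /= !big_cat /= !big_map.
case: ifP => [/andP [/eqP -> /eqP ->]|not_cherry].
  by rewrite /= big_seq1 !big_nil !addr0 mulr1.
have l_gt0 := leaves_gt0 l; have r_gt0 := leaves_gt0 r.
have leaves_ge3 : (3 <= leaves l + leaves r)%N.
  rewrite ltnNge; apply/negP => leaves_le2.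
  have /leaves_eq1 l_leaf : leaves l = 1%N by lia.
  have /leaves_eq1 r_leaf : leaves r = 1%N by lia.
  by rewrite l_leaf r_leaf in not_cherry.
have pred2_neq0 : ((leaves l + leaves r).-2%:R != 0 :> R) by rewrite pnatr_eq0; lia.
have pred2_split :
    (leaves l + leaves r).-2%:R = (leaves l).-1%:R + (leaves r).-1%:R :> R.
  by rewrite -natrD; congr (_%:R); lia.
have sum_left : \sum_(u <- parents l) pw (Node u r)
    = ((leaves l + leaves r).-2%:R)^-1 * pw r * ((leaves l).-1%:R * pw l) :> R.
  rewrite -IHl mulr_sumr; apply: eq_big_seq => u /leaves_parents lu /=.
  have -> : (leaves u + leaves r - 1 = (leaves l + leaves r).-2)%N by rewrite lu; lia.
  by rewrite -mulrA (mulrC (pw u)).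
have sum_right : \sum_(u <- parents r) pw (Node l u)
    = ((leaves l + leaves r).-2%:R)^-1 * pw l * ((leaves r).-1%:R * pw r) :> R.
  rewrite -IHr mulr_sumr; apply: eq_big_seq => u /leaves_parents ru /=.
  have -> : (leaves l + leaves u - 1 = (leaves l + leaves r).-2)%N by rewrite ru; lia.
  by rewrite mulrA.
rewrite big_nil add0r sum_left sum_right pred2_split.
by field; rewrite -pred2_split.
Qed.
End Weights.

Fixpoint trees_upto (m : nat) : seq tree :=
  match m with
  | 0 => [::]
  | m.+1 => Leaf :: [seq Node l r | l <- trees_upto m, r <- trees_upto m]
  end.

Lemma mem_trees_upto (m : nat) (t : tree) : (leaves t <= m)%N -> t \in trees_upto m.
Proof.
elim: m t => [|m IHm] [|l r] /=; rewrite ?inE //.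
- by move: (leaves_gt0 l) (leaves_gt0 r); lia.
- move=> lr_le; apply: allpairs_f; apply: IHm.
  all: by move: (leaves_gt0 l) (leaves_gt0 r); lia.
Qed.

Local Open Scope classical_set_scope.
Local Open Scope ereal_scope.

Section FiniteValues.
Variables (d : measure_display) (T : measurableType d) (R : realType).
Variables (V : eqType) (X : T -> V).
Hypothesis measurable_X : forall v, measurable [set w | X w = v].

Lemma measurable_mem_seq (s : seq V) : measurable [set w | X w \in s].
Proof.
elim: s => [|v s IHs].
  by rewrite (_ : [set w | _] = set0) //; apply/seteqP; split => w.
rewrite (_ : [set w | _] = [set w | X w = v] `|` [set w | X w \in s]).
  exact: measurableU.
apply/seteqP; split => w /=; rewrite inE.
  by case/orP => [/eqP ->|]; [left|right].
by case=> [->|->]; rewrite ?eqxx ?orbT.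
Qed.

Lemma measure_mem_seq (mu : measure T R) (E : set T) (s : seq V) :
  measurable E -> uniq s ->
  mu (E `&` [set w | X w \in s]) = \sum_(v <- s) mu (E `&` [set w | X w = v]).
Proof.
move=> mE; elim: s => [|v s IHs] /=.
  by rewrite big_nil (_ : _ `&` _ = set0) ?measure0 //; apply/seteqP; split => w // [].
case/andP=> v_notin_s s_uniq; rewrite big_cons -IHs //.
rewrite (_ : _ `&` _ = (E `&` [set w | X w = v]) `|` (E `&` [set w | X w \in s])).
  rewrite measureU //.
  - exact: measurableI.
  - exact: measurableI (measurable_mem_seq s).
  apply/seteqP; split => w // [[_ /= Xw_v] [_ /= Xw_s]].
  by move: Xw_s; rewrite Xw_v (negbTE v_notin_s).
apply/seteqP; split => w /=; rewrite inE.
  by move=> [Ew /orP [/eqP ->|Xw]]; [left|right].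
by move=> [[Ew ->]|[Ew Xw]]; split; rewrite ?eqxx ?Xw ?orbT.
Qed.

End FiniteValues.

Section McKeanMarginals.
Variables (R : realType) (d : measure_display) (Omega : measurableType d).
Variables (mu : probability Omega R) (tau : nat -> Omega -> tree).
Hypothesis leaves_tau : forall n w, (1 <= n)%N -> leaves (tau n w) = n.
Hypothesis measurable_tau : forall n s, measurable [set w | tau n w = s].
Hypothesis tau1_Leaf : mu [set w | tau 1%N w = Leaf] = 1.
Hypothesis tau_germ : forall n tn k, (1 <= n)%N -> leaves tn = n -> (1 <= k <= n)%N ->
  mu ([set w | tau n.+1 w = germ tn k] `&` [set w | tau n w = tn])
  = ((n%:R)^-1)%:E * mu [set w | tau n w = tn].
Hypothesis tau_not_germ : forall n tn s, (1 <= n)%N -> leaves tn = n ->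
  (forall k, (1 <= k <= n)%N -> s <> germ tn k) ->
  mu ([set w | tau n.+1 w = s] `&` [set w | tau n w = tn]) = 0.

Lemma mu_tau_succ (n : nat) (s : tree) : (1 <= n)%N -> leaves s = n.+1 ->
  mu [set w | tau n.+1 w = s]
  = \sum_(u <- parents s) ((n%:R)^-1)%:E * mu [set w | tau n w = u].
Proof.
move=> n_gt0 leaves_s.
set others := [seq u <- undup (trees_upto n) | (leaves u == n) && (u \notin parents s)].
have values_tau w : tau n w \in parents s ++ others.
  rewrite mem_cat mem_filter mem_undup leaves_tau // eqxx mem_trees_upto ?leaves_tau //.
  by rewrite andbT orbN.
have values_uniq : uniq (parents s ++ others).
  rewrite cat_uniq parents_uniq filter_uniq ?undup_uniq // andbT.
  by apply/hasPn => u; rewrite mem_filter => /andP [/andP [_ ->]].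
have values_all : [set w | tau n w \in parents s ++ others] = setT.
  by apply/seteqP; split => w // _; exact: values_tau.
rewrite -(setIT [set w | tau n.+1 w = s]) -values_all.
rewrite (@measure_mem_seq _ _ _ _ _ (measurable_tau n)) // big_cat /=.
rewrite [X in _ + X]big1_seq ?adde0 => [|u]; last first.
  rewrite mem_filter => /andP [_ /andP [/andP [/eqP leaves_u u_notin] _]].
  apply: tau_not_germ => // k k_range s_germ.
  by move: u_notin; rewrite s_germ germ_parents ?leaves_u.
apply: eq_big_seq => u u_parent.
have leaves_u : leaves u = n.
  by apply/succn_inj; rewrite -leaves_s (leaves_parents u_parent).
have [k k_range ->] := parentsP u_parent.
by apply: tau_germ => //; rewrite -leaves_u.
Qed.

Lemma mu_tau (n : nat) (s : tree) : (1 <= n)%N -> leaves s = n ->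
  mu [set w | tau n w = s] = (pw s)%:E.
Proof.
elim: n s => [//|n IHn] s _ leaves_s.
case: n IHn leaves_s => [|n] IHn leaves_s.
  by rewrite (leaves_eq1 leaves_s) tau1_Leaf.
rewrite mu_tau_succ //.
rewrite (eq_big_seq (fun u => ((n.+1%:R)^-1 * pw u)%:E)) => [|u]; last first.
  move=> /leaves_parents; rewrite leaves_s => -[leaves_u].
  by rewrite IHn.
by rewrite sumEFin -mulr_sumr sum_pw_parents leaves_s mulKf ?pnatr_eq0.
Qed.

End McKeanMarginals.

Theorem lemma3 (R : realType) (d : measure_display) (Omega : measurableType d)
  (P : R -> probability Omega R) (tau : nat -> Omega -> tree) :
  (* tau_n takes values in T(n) *)
  (forall n w, (1 <= n)%N -> leaves (tau n w) = n) ->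
  (* the events {tau_n = s} are measurable *)
  (forall n s, measurable [set w | tau n w = s]) ->
  (forall t : R, (0 <= t)%R ->
     (* P_t[tau_1 = t_1] = 1 *)
     P t [set w | tau 1%N w = Leaf] = 1 /\
     (* P_t[tau_{n+1} = t_{n,k} | tau_n = t_n] = 1/n, k = 1..n *)
     (forall n tn k, (1 <= n)%N -> leaves tn = n -> (1 <= k <= n)%N ->
        P t ([set w | tau n.+1 w = germ tn k] `&` [set w | tau n w = tn])
        = ((n%:R)^-1)%:E * P t [set w | tau n w = tn]) /\
     (* P_t[tau_{n+1} = s | tau_n = t_n] = 0 if s is not a germination of t_n *)
     (forall n tn s, (1 <= n)%N -> leaves tn = n ->
        (forall k, (1 <= k <= n)%N -> s <> germ tn k) ->
        P t ([set w | tau n.+1 w = s] `&` [set w | tau n w = tn]) = 0) /\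
     (* Markov property: P_t[tau_{n+1} = s | tau_1 = h_1, ..., tau_n = h_n]
        = P_t[tau_{n+1} = s | tau_n = h_n] (in product form) *)
     (forall n (h : nat -> tree) s, (1 <= n)%N ->
        P t ([set w | tau n.+1 w = s] `&` history tau n h)
          * P t [set w | tau n w = h n]
        = P t ([set w | tau n.+1 w = s] `&` [set w | tau n w = h n])
          * P t (history tau n h))) ->
  forall t : R, (0 <= t)%R ->
  forall (n : nat) (tn : tree), (1 <= n)%N -> leaves tn = n ->
    P t [set w | tau n w = tn] = (pw tn : R)%:E.
Proof.
move=> leaves_tau measurable_tau transitions t t_ge0 n tn n_gt0 leaves_tn.
have [tau1_Leaf [tau_germ [tau_not_germ _]]] := transitions t t_ge0.
exact: mu_tau.
Qed.
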